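(* Let $\mathsf{K}>0$ and $\omega_{\Delta^n}=\sqrt{-1}\sum_{\alpha=1}^n\frac{2}{\mathsf{K}(1-|z^\alpha|^2)^2}dz^\alpha\wedge dz^{\bar\alpha}$ on $\Delta^n$. Let $u\colon\Delta\to\Delta^n$ be a holomorphic map which is a totally geodesic isometric embedding with respect to some Poincaré metric $\sqrt{-1}\frac{2}{\mathsf{K}'(1-|\zeta|^2)^2}d\zeta\wedge d\bar\zeta$ ($\mathsf{K}'>0$) on $\Delta$ and $\omega_{\Delta^n}$, and put $S=u(\Delta)$. Suppose $\varphi$ is a potential of $\omega_{\Delta^n}$ on an open set $V\subset\Delta^n$ meeting $S$, with $|\partial\varphi|_{\omega_{\Delta^n}}^2\le\mathsf{C}$ on $V$ for some $\mathsf{C}>0$, such that (1) the gradient vector field $\mathcal{V}=\mathrm{grad}(\varphi)$ is tangent to $S$, i.e. $\mathcal{V}(p)\in T^{(1,0)}_pS$ for each $p\in S\cap V$, and (2) $|\partial\varphi|_{\omega_{\Delta^n}}^2\equiv\mathsf{C}$ on $S\cap V$. Then $u$ has full rank $n$, i.e. every component $u^\alpha$ of $u$ is nonconstant.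
   Context: Conventions: $dd^c=\sqrt{-1}\partial\bar\partial$; a potential satisfies $dd^c\varphi=\omega_{\Delta^n}$; the gradient vector field is the $(1,0)$-vector field $\mathcal{V}$ with $\partial\varphi(v)=\langle v,\overline{\mathcal{V}}\rangle_\omega$ for all $(1,0)$-vectors $v$, and $|\partial\varphi|_\omega=|\mathcal{V}|_\omega$. For such a totally geodesic isometric holomorphic disc each component $u^\alpha$ is either constant or an automorphism of $\Delta$; the rank of $u$ is the number of nonconstant components. *)

From Stdlib Require Import Reals.
From Coquelicot Require Import Coquelicot.
From mathcomp Require Import ssreflect ssrfun ssrbool eqtype ssrnat fintype bigop.
Open Scope R_scope.

Definition Cn (n : nat) := 'I_n -> C.

Definition in_disc (z : C) : Prop := Cmod z < 1.
Definition in_polydisc {n} (z : Cn n) : Prop := forall a, in_disc (z a).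

Definition upd {n} (z : Cn n) (a : 'I_n) (w : C) : Cn n :=
  fun b => if b == a then w else z b.

(* real directions in C^n = R^{2n}: (a,false) = d/dx^a, (a,true) = d/dy^a *)
Definition dir (n : nat) := ('I_n * bool)%type.

Definition shift {n} (z : Cn n) (d : dir n) (t : R) : Cn n :=
  let (a, im) := d in
  upd z a (Cplus (z a) (if im then (0, t) else (t, 0))).

Definition D {n} (d : dir n) (f : Cn n -> R) (z : Cn n) : R :=
  Derive (fun t => f (shift z d t)) 0.

Definition Dx {n} (a : 'I_n) := @D n (a, false).
Definition Dy {n} (a : 'I_n) := @D n (a, true).

Fixpoint Dl {n} (l : list (dir n)) (f : Cn n -> R) : Cn n -> R :=
  match l with
  | nil => f
  | cons d l' => D d (Dl l' f)
  end.

Definition open_Cn {n} (V : Cn n -> Prop) : Prop :=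
  forall z, V z -> exists del, del > 0 /\
    forall w, (forall a, Cmod (Cminus (w a) (z a)) < del) -> V w.

Definition continuous_at_on {n} (V : Cn n -> Prop) (f : Cn n -> R) (z : Cn n) : Prop :=
  forall eps, eps > 0 -> exists del, del > 0 /\
    forall w, V w -> (forall a, Cmod (Cminus (w a) (z a)) < del) ->
      Rabs (f w - f z) < eps.

Definition smooth_on {n} (V : Cn n -> Prop) (f : Cn n -> R) : Prop :=
  forall (l : list (dir n)) z, V z ->
    continuous_at_on V (Dl l f) z /\
    forall d, ex_derive (fun t => Dl l f (shift z d t)) 0.

(* Wirtinger derivative  d phi / d z^a  of a real function *)
Definition dz {n} (a : 'I_n) (phi : Cn n -> R) (z : Cn n) : C :=
  (Dx a phi z / 2, - Dy a phi z / 2).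

(* mixed Wirtinger derivative  d^2 phi / d z^a d zbar^b  of a real function *)
Definition ddbar {n} (a b : 'I_n) (phi : Cn n -> R) (z : Cn n) : C :=
  ((Dx a (Dx b phi) z + Dy a (Dy b phi) z) / 4,
   (Dx a (Dy b phi) z - Dy a (Dx b phi) z) / 4).

(* coefficient g_a of omega_{Delta^n} = sqrt(-1) sum_a g_a dz^a /\ dzbar^a *)
Definition gP (K : R) (w : C) : R := 2 / (K * (1 - Cmod w ^ 2) ^ 2).

(* phi is a potential of omega_{Delta^n} on V:  dd^c phi = omega, i.e.
   phi_{a bbar} = delta_{ab} g_a. *)
Definition is_potential {n} (K : R) (V : Cn n -> Prop) (phi : Cn n -> R) : Prop :=
  smooth_on V phi /\
  forall z, V z -> forall a b,
    ddbar a b phi z = (if a == b then (gP K (z a), 0) else (0, 0)).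

(* gradient vector field: dphi(v) = <v, conj(grad)>_omega, so
   grad^a = conj(phi_a) / g_a *)
Definition grad {n} (K : R) (phi : Cn n -> R) (z : Cn n) : Cn n :=
  fun a => Cmult (Cconj (dz a phi z)) (/ gP K (z a), 0).

Definition norm_dphi2 {n} (K : R) (phi : Cn n -> R) (z : Cn n) : R :=
  \big[Rplus/0]_(a < n) (Cmod (dz a phi z) ^ 2 / gP K (z a)).

Definition holo_disc_map {n} (u : 'I_n -> C -> C) : Prop :=
  forall zeta, in_disc zeta ->
    in_polydisc (fun a => u a zeta) /\ forall a, ex_derive (u a) zeta.

(* u^* omega_{Delta^n} = Poincare metric with curvature constant K' *)
Definition isometric_disc {n} (K K' : R) (u : 'I_n -> C -> C) : Prop :=
  forall zeta, in_disc zeta ->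
    \big[Rplus/0]_(a < n) (gP K (u a zeta) * Cmod (C_derive (u a) zeta) ^ 2)
    = gP K' zeta.

(* vanishing second fundamental form of the holomorphic curve u(Delta):
   the (Chern = Levi-Civita) covariant derivative nabla_{u'} u' of the product
   metric, whose a-th component is u_a'' + Gamma_a(u_a) (u_a')^2 with
   Gamma_a(w) = d log g = 2 conj(w)/(1-|w|^2), is tangent, i.e. a complex
   multiple of u'. *)
Definition totally_geodesic_disc {n} (u : 'I_n -> C -> C) : Prop :=
  forall zeta, in_disc zeta -> exists lam : C, forall a,
    Cplus (C_derive (C_derive (u a)) zeta)
          (Cmult (Cmult (2 / (1 - Cmod (u a zeta) ^ 2), 0) (Cconj (u a zeta)))
                 (Cmult (C_derive (u a) zeta) (C_derive (u a) zeta)))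
    = Cmult lam (C_derive (u a) zeta).

Definition injective_on_disc {n} (u : 'I_n -> C -> C) : Prop :=
  forall z1 z2, in_disc z1 -> in_disc z2 ->
    (fun a => u a z1) = (fun a => u a z2) -> z1 = z2.

Definition tot_geod_isom_embedding {n} (K K' : R) (u : 'I_n -> C -> C) : Prop :=
  holo_disc_map u /\ injective_on_disc u /\
  isometric_disc K K' u /\ totally_geodesic_disc u.

(* Suppose the coordinate u^a is constant and let p = u(zeta0) lie in V.  The
   a-th component of the tangent vector u'(zeta0) vanishes, so tangency of
   grad phi forces phi_a(p) = 0.  Since |dphi|^2 <= C on V with equality at p,
   p is an interior maximum of |dphi|^2 = sum_b |phi_b|^2 / g_b, so its second
   derivatives along the two real directions of the z^a-axis are <= 0.  Yet
   their sum, the z^a-Laplacian, is positive: for b <> a the weight g_b does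
   not depend on z^a and phi_b is holomorphic in z^a (because phi_{a bbar} = 0),
   so |phi_b|^2 is subharmonic. *)

From Pilot Require Import Defs.
From HB Require Import structures.
From Stdlib Require Import Reals Lra FunctionalExtensionality.
From Coquelicot Require Import Coquelicot.
From mathcomp Require Import ssreflect ssrfun ssrbool eqtype ssrnat fintype bigop.
(* Re-import so that [D] and [Dx] denote the directional derivatives of Defs,
   not Coquelicot's [AutoDerive.D] or Stdlib's [Rderiv.Dx]. *)
Import Defs.
Open Scope R_scope.

HB.instance Definition _ := Monoid.isComLaw.Build R 0 Rplus
  (fun x y z => esym (Rplus_assoc x y z)) Rplus_comm Rplus_0_l.

Definition is_derive2 (f : R -> R) (x f1 f2 : R) : Prop :=
  exists f' : R -> R,
    locally x (fun t => is_derive f t (f' t)) /\ f' x = f1 /\ is_derive f' x f2.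

Lemma is_derive2_const c x : is_derive2 (fun _ => c) x 0 0.
Proof.
exists (fun _ => 0); split; last split=> //.
- by apply: filter_forall => t; apply: is_derive_const.
- exact: is_derive_const.
Qed.

Lemma is_derive2_plus f g x f1 f2 g1 g2 :
  is_derive2 f x f1 f2 -> is_derive2 g x g1 g2 ->
  is_derive2 (fun t => f t + g t) x (f1 + g1) (f2 + g2).
Proof.
move=> [f' [Hf [<- Hf']]] [g' [Hg [<- Hg']]].
exists (fun t => f' t + g' t); split; last split=> //.
- by apply: filter_imp (filter_and _ _ Hf Hg) => t [] ; apply: is_derive_plus.
- exact: is_derive_plus.
Qed.

Lemma is_derive2_mult f g x f1 f2 g1 g2 :
  is_derive2 f x f1 f2 -> is_derive2 g x g1 g2 ->
  is_derive2 (fun t => f t * g t) x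
    (f1 * g x + f x * g1) (f2 * g x + 2 * f1 * g1 + f x * g2).
Proof.
move=> [f' [Hf [<- Hf']]] [g' [Hg [<- Hg']]].
exists (fun t => f' t * g t + f t * g' t); split; last split=> //.
- by apply: filter_imp (filter_and _ _ Hf Hg) => t [] ; apply: Derive.is_derive_mult.
- have Dg := locally_singleton _ _ Hg; have Df := locally_singleton _ _ Hf.
  have := is_derive_plus _ _ _ _ _ (Derive.is_derive_mult _ _ _ _ _ Hf' Dg)
                                   (Derive.is_derive_mult _ _ _ _ _ Df Hg').
  by congr is_derive; rewrite /plus /=; ring.
Qed.

Lemma is_derive2_sum n (F : 'I_n -> R -> R) (F1 F2 : 'I_n -> R) x :
  (forall i, is_derive2 (F i) x (F1 i) (F2 i)) ->
  is_derive2 (fun t => \big[Rplus/0]_(i < n) F i t) x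
    (\big[Rplus/0]_(i < n) F1 i) (\big[Rplus/0]_(i < n) F2 i).
Proof.
move=> HF; rewrite unlock; elim: (index_enum _) => [|i r IH] /=.
  exact: is_derive2_const.
exact: is_derive2_plus.
Qed.

Lemma lt_of_derive_pos (g g' : R -> R) a b :
  a < b -> (forall t, a <= t <= b -> is_derive g t (g' t)) ->
  0 <= g' a -> (forall t, a < t <= b -> 0 < g' t) -> g a < g b.
Proof.
move=> ab Hg Ha Hpos; set m := (a + b) / 2.
have Hcont t : a <= t <= b -> continuity_pt g t.
  by move=> Ht; apply/continuity_pt_filterlim/ex_derive_continuous; exists (g' t); apply: Hg.
have [c [Hc Ec]] : exists c, a <= c <= m /\ g m - g a = g' c * (m - a).
  have := MVT_gen g a m g'; rewrite Rmin_left ?Rmax_right /m; try lra.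
  by apply=> t Ht; [apply: Hg | apply: Hcont]; lra.
have [c' [Hc' Ec']] : exists c, m <= c <= b /\ g b - g m = g' c * (b - m).
  have := MVT_gen g m b g'; rewrite Rmin_left ?Rmax_right /m; try lra.
  by apply=> t Ht; [apply: Hg | apply: Hcont]; lra.
have gc : 0 <= g' c by case: (Req_dec c a) => [->|?] //; apply/Rlt_le/Hpos; lra.
have gc' : 0 < g' c' by apply: Hpos; rewrite /m in Hc'; lra.
rewrite /m in Ec Ec'; nra.
Qed.

Lemma is_derive_pos_right (g : R -> R) x l : is_derive g x l -> 0 < l -> g x = 0 ->
  exists d : posreal, forall h, 0 < h < d -> 0 < g (x + h).
Proof.
move=> /is_derive_Reals Hg l0 gx0; have [d Hd] := Hg l l0; exists d => h Hh.
have := Hd h ltac:(lra) ltac:(rewrite Rabs_right; lra).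
rewrite gx0 Rminus_0_r => /Rabs_def2 [_ H].
have -> : g (x + h) = g (x + h) / h * h by field; lra.
by apply: Rmult_lt_0_compat; lra.
Qed.

Lemma is_derive2_local_max f x f1 f2 :
  is_derive2 f x f1 f2 -> locally x (fun t => f t <= f x) -> f2 <= 0.
Proof.
move=> [f' [[e He] [_ Hf']]] [e' Hmax]; apply: Rnot_lt_le => f2_gt0.
set r := Rmin e e'; have r0 : 0 < r by apply: Rmin_glb_lt; apply: cond_pos.
have Hnear t : Rabs (t - x) < r -> is_derive f t (f' t) /\ f t <= f x.
  by move=> Ht; split; [apply: He | apply: Hmax];
     rewrite /ball /= /AbsRing_ball /abs /minus /plus /opp /=;
     apply: (Rlt_le_trans _ _ _ Ht); [apply: Rmin_l | apply: Rmin_r].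
have f'x0 : f' x = 0.
  have Hx : Rabs (x - x) < r by rewrite Rminus_diag Rabs_R0.
  have Df := proj1 (is_derive_Reals _ _ _) (proj1 (Hnear x Hx)).
  apply: (deriv_maximum f (x - r) (x + r) x (exist _ _ Df)); try lra.
  by move=> t H1 H2; apply: (proj2 (Hnear t _)); apply: Rabs_def1; lra.
have [d f'_pos] := is_derive_pos_right f' x f2 Hf' f2_gt0 f'x0.
set s := Rmin r d / 2.
have s0 : 0 < s by rewrite /s; have := Rmin_glb_lt _ _ 0 r0 (cond_pos d); lra.
have s_r : s < r by move: s0; rewrite /s; have := Rmin_l r d; lra.
have s_d : s < d by move: s0; rewrite /s; have := Rmin_r r d; lra.
have Hin t : x <= t <= x + s -> Rabs (t - x) < r by move=> Ht; rewrite Rabs_right; lra.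
have f'_gt0 t : x < t <= x + s -> 0 < f' t.
  by move=> Ht; have := f'_pos (t - x) ltac:(lra); rewrite Rplus_minus.
have := lt_of_derive_pos f f' x (x + s) ltac:(lra) (fun t Ht => proj1 (Hnear t (Hin t Ht)))
  (Req_le _ _ (esym f'x0)) f'_gt0.
have Hs : x <= x + s <= x + s by lra.
have := proj2 (Hnear (x + s) (Hin (x + s) Hs)); lra.
Qed.

Lemma is_derive2_ext f g x f1 f2 g1 g2 : (forall t, f t = g t) -> f1 = g1 -> f2 = g2 ->
  is_derive2 f x f1 f2 -> is_derive2 g x g1 g2.
Proof. by move=> /functional_extensionality -> -> ->. Qed.

Lemma is_derive2_weighted_sq P Q W x p1 p2 q1 q2 w1 w2 :
  is_derive2 P x p1 p2 -> is_derive2 Q x q1 q2 -> is_derive2 W x w1 w2 ->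
  (w1 = 0 /\ w2 = 0) \/ (P x = 0 /\ Q x = 0) ->
  is_derive2 (fun t => (P t ^ 2 + Q t ^ 2) / 4 * W t) x
    ((P x * p1 + Q x * q1) / 2 * W x + (P x ^ 2 + Q x ^ 2) / 4 * w1)
    ((p1 ^ 2 + P x * p2 + q1 ^ 2 + Q x * q2) / 2 * W x).
Proof.
move=> HP HQ HW degenerate.
have HS := is_derive2_mult _ _ _ _ _ _ _
  (is_derive2_plus _ _ _ _ _ _ _ (is_derive2_mult _ _ _ _ _ _ _ HP HP)
                                 (is_derive2_mult _ _ _ _ _ _ _ HQ HQ))
  (is_derive2_const (/ 4) x).
apply: is_derive2_ext (is_derive2_mult _ _ _ _ _ _ _ HS HW) => [t||]; try field.
by case: degenerate => [[-> ->]|[-> ->]]; field.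
Qed.

Lemma ex_derive_trans (g : R -> R) t : ex_derive (fun s => g (s + t)) 0 -> ex_derive g t.
Proof.
move=> [l Hl]; exists l.
have : is_derive_n (fun s => g (s + t)) 1 (t + - t) l by rewrite Rplus_opp_r.
move=> /is_derive_n_comp_trans /=.
by apply: is_derive_ext => s; rewrite Rplus_assoc Rplus_opp_l Rplus_0_r.
Qed.

Definition gP_inv (K : R) (w : C) : R := K * (1 - Cmod w ^ 2) ^ 2 / 2.

(* This holds also on the unit circle, where [gP] divides by zero: Rocq's [/ 0]
   is [0], so both sides vanish there. *)
Lemma Rdiv_gP K w x : K <> 0 -> x / gP K w = x * gP_inv K w.
Proof.
move=> K0; rewrite /gP /gP_inv; case: (Req_dec (1 - Cmod w ^ 2) 0) => [->|w0].
- have -> : K * 0 ^ 2 = 0 by ring.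
  by rewrite /Rdiv Rinv_0 Rmult_0_r Rinv_0; ring.
- by field; split => //; apply: pow_nonzero.
Qed.

Lemma gP_inv_gt0 K w : K > 0 -> in_disc w -> 0 < gP_inv K w.
Proof.
rewrite /in_disc /gP_inv => K0 w1; have := Cmod_ge_0 w => w0.
have : 0 < (1 - Cmod w ^ 2) ^ 2 by apply: pow_lt; nra.
nra.
Qed.

Lemma gP_gt0 K w : K > 0 -> in_disc w -> 0 < gP K w.
Proof.
move=> K0 w1; have := gP_inv_gt0 K w K0 w1; rewrite /gP /gP_inv => H.
apply: Rdiv_lt_0_compat; nra.
Qed.

Section Polydisc.
Variable n : nat.
Implicit Types (z p : Cn n) (d e : dir n) (F G phi : Cn n -> R) (V : Cn n -> Prop).

Lemma shift0 z d : shift z d 0 = z.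
Proof.
case: d => a im; apply: functional_extensionality => b; rewrite /shift /upd.
case: eqP => [->|] //; case: im; rewrite /Cplus /=;
  by apply: injective_projections => /=; ring.
Qed.

Lemma shift_other z a im t b : b <> a -> shift z (a, im) t b = z b.
Proof. by move=> /eqP /negbTE ba; rewrite /shift /upd ba. Qed.

Lemma shift_comm z d e s t : shift (shift z d s) e t = shift (shift z e t) d s.
Proof.
case: d => a im; case: e => a' im'; apply: functional_extensionality => b.
rewrite /shift /upd; repeat case: eqP => ?; subst; try congruence;
  rewrite /Cplus /=; apply: injective_projections => /=; ring.
Qed.

Lemma shift_shift z d s t : shift (shift z d s) d t = shift z d (s + t).
Proof.
case: d => a im; apply: functional_extensionality => b.
rewrite /shift /upd eqxx; case: eqP => // _.
by case: im; rewrite /Cplus /=; apply: injective_projections => /=; ring.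
Qed.

Lemma Cmod_shift z d t b : Cmod (Cminus (shift z d t b) (z b)) <= Rabs t.
Proof.
case: d => a im; rewrite /shift /upd; case: eqP => [->|_].
- have -> : Cminus (Cplus (z a) (if im then (0, t) else (t, 0))) (z a)
            = if im then (0, t) else (t, 0).
    by case: im; rewrite /Cminus /Cplus /=; apply: injective_projections => /=; ring.
  by case: im; rewrite /Cmod /= -sqrt_Rsqr_abs /Rsqr; apply: Req_le; f_equal; ring.
- have -> : Cminus (z b) (z b) = 0 by rewrite /Cminus Cplus_opp_r.
  by rewrite Cmod_0; apply: Rabs_pos.
Qed.

Lemma D_shift F z d t : D d F (shift z d t) = Derive (fun s => F (shift z d s)) t.
Proof.
have := Derive_n_comp_trans (fun s => F (shift z d s)) 1 0 t.
rewrite /= Rplus_0_l => <-.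
by apply: Derive_ext => s; rewrite shift_shift Rplus_comm.
Qed.

Lemma Dl_D l d F : Dl l (D d F) = Dl (l ++ d :: nil) F.
Proof. by elim: l => //= e l ->. Qed.

Lemma smooth_on_D V F d : smooth_on V F -> smooth_on V (D d F).
Proof. by move=> HF l z Hz; rewrite Dl_D; apply: HF. Qed.

Lemma is_derive_shift V F z d t :
  smooth_on V F -> V (shift z d t) ->
  is_derive (fun s => F (shift z d s)) t (D d F (shift z d t)).
Proof.
move=> HF Hz; rewrite D_shift; apply/Derive_correct/ex_derive_trans.
have [_ /(_ d)] := HF nil _ Hz.
by apply: ex_derive_ext => s; rewrite /= shift_shift Rplus_comm.
Qed.

Lemma Cmod_shift2 p d e u v b :
  Cmod (Cminus (shift (shift p d u) e v b) (p b)) <= Rabs u + Rabs v.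
Proof.
have -> : Cminus (shift (shift p d u) e v b) (p b)
  = Cplus (Cminus (shift (shift p d u) e v b) (shift p d u b)) (Cminus (shift p d u b) (p b)).
  by rewrite /Cminus /Cplus /Copp /=; apply: injective_projections => /=; ring.
apply: Rle_trans (Cmod_triangle _ _) _; rewrite Rplus_comm.
by apply: Rplus_le_compat; apply: Cmod_shift.
Qed.

Lemma near_shift2 p d e (P : Cn n -> Prop) del : del > 0 ->
  (forall w, (forall b, Cmod (Cminus (w b) (p b)) < del) -> P w) ->
  locally_2d (fun u v => P (shift (shift p d u) e v)) 0 0.
Proof.
move=> del0 HP; exists (mkposreal _ (Rdiv_lt_0_compat _ _ del0 Rlt_0_2)) => u v /= Hu Hv.
apply: HP => b; apply: Rle_lt_trans (Cmod_shift2 _ _ _ _ _ _) _.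
by rewrite !Rminus_0_r in Hu Hv; lra.
Qed.

Lemma open_near_shift2 V p d e : open_Cn V -> V p ->
  locally_2d (fun u v => V (shift (shift p d u) e v)) 0 0.
Proof. by move=> HV /HV [del [del0 Hdel]]; apply: near_shift2 Hdel. Qed.

Lemma open_near_shift V p d : open_Cn V -> V p -> locally 0 (fun t => V (shift p d t)).
Proof.
move=> HV Hp; have := locally_2d_1d_const_y _ _ _ (open_near_shift2 V p d d HV Hp).
by apply: filter_imp => t; rewrite shift0.
Qed.

Lemma D_eq_on V F G p d : open_Cn V -> V p -> (forall z, V z -> F z = G z) ->
  D d F p = D d G p.
Proof.
move=> HV Hp FG; rewrite /D; apply: Derive_ext_loc.
by apply: filter_imp (open_near_shift V p d HV Hp) => t; apply: FG.
Qed.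

Lemma D_opp F p d : D d (fun z => - F z) p = - D d F p.
Proof. exact: Derive_opp. Qed.

Lemma continuity_2d_shift2 V F p d e : smooth_on V F -> open_Cn V -> V p ->
  continuity_2d_pt (fun u v => F (shift (shift p d u) e v)) 0 0.
Proof.
move=> HF HV Hp eps; have [HFc _] := HF nil p Hp.
have [del [del0 Hdel]] := HFc eps (cond_pos eps).
have [del' [del'0 HVdel]] := HV p Hp.
have m0 : Rmin del del' > 0 by apply: Rmin_glb_lt.
rewrite /= !shift0.
apply: (near_shift2 p d e (fun w => Rabs (F w - F p) < eps) _ m0) => w Hw.
apply: Hdel => [|b].
- by apply: HVdel => b; apply: Rlt_le_trans (Hw b) (Rmin_r _ _).
- exact: Rlt_le_trans (Hw b) (Rmin_l _ _).
Qed.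

Lemma is_derive_shift2 V F p d e u v :
  smooth_on V F -> V (shift (shift p d u) e v) ->
  is_derive (fun s => F (shift (shift p d s) e v)) u (D d F (shift (shift p d u) e v)).
Proof.
move=> HF; rewrite !(shift_comm p d e) => Hw.
by apply: is_derive_ext (is_derive_shift V F _ d u HF Hw) => s; rewrite shift_comm.
Qed.

Lemma D_comm V F p d e : smooth_on V F -> open_Cn V -> V p ->
  D d (D e F) p = D e (D d F) p.
Proof.
move=> HF HV Hp; set f2 := fun u v => F (shift (shift p d u) e v).
have HFd := smooth_on_D V F d HF; have HFe := smooth_on_D V F e HF.
have inner_e u v : Derive (fun t => f2 u t) v = D e F (shift (shift p d u) e v).
  by rewrite D_shift.
have inner_d u v : Derive (fun t => f2 t v) u = D d F (shift (shift p d u) e v).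
  by rewrite !(shift_comm p d e) D_shift; apply: Derive_ext => s; rewrite shift_comm.
have outer_de u v : Derive (fun x => Derive (fun t => f2 x t) v) u
                    = D d (D e F) (shift (shift p d u) e v).
  rewrite shift_comm D_shift; apply: Derive_ext => s.
  by rewrite inner_e shift_comm.
have outer_ed u v : Derive (fun x => Derive (fun t => f2 t x) u) v
                    = D e (D d F) (shift (shift p d u) e v).
  by rewrite D_shift; apply: Derive_ext => s; rewrite inner_d.
have := Schwarz f2 0 0; rewrite outer_de outer_ed !shift0; apply.
- apply: locally_2d_impl (open_near_shift2 V p d e HV Hp).
  apply: locally_2d_forall => u v Hw; split; [|split; [|split]].
  + by eexists; apply: is_derive_shift2 HF Hw.
  + by eexists; apply: is_derive_shift HF Hw.
  + by eexists; apply: is_derive_ext (is_derive_shift2 V _ p d e u v HFe Hw) => s;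
       rewrite inner_e.
  + by eexists; apply: is_derive_ext (is_derive_shift V _ (shift p d u) e v HFd Hw) => s;
       rewrite inner_d.
- have -> : (fun u v => Derive (fun x => Derive (fun t => f2 x t) v) u)
            = (fun u v => D d (D e F) (shift (shift p d u) e v)).
    by do 2 (apply: functional_extensionality => ?); apply: outer_de.
  exact: continuity_2d_shift2 (smooth_on_D V _ d HFe) HV Hp.
- have -> : (fun u v => Derive (fun x => Derive (fun t => f2 t x) u) v)
            = (fun u v => D e (D d F) (shift (shift p d u) e v)).
    by do 2 (apply: functional_extensionality => ?); apply: outer_ed.
  exact: continuity_2d_shift2 (smooth_on_D V _ e HFd) HV Hp.
Qed.

Lemma cauchy_riemann_laplacian V F G p a :
  smooth_on V F -> smooth_on V G -> open_Cn V -> V p ->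
  (forall z, V z -> Dx a F z = Dy a G z /\ Dy a F z = - Dx a G z) ->
  Dx a (Dx a F) p + Dy a (Dy a F) p = 0 /\ Dx a (Dx a G) p + Dy a (Dy a G) p = 0.
Proof.
move=> HF HG HV Hp CR; rewrite /Dx /Dy.
have -> : D (a, false) (D (a, false) F) p = D (a, false) (D (a, true) G) p.
  by apply: (D_eq_on V) => // z /CR [].
have -> : D (a, true) (D (a, true) F) p = - D (a, true) (D (a, false) G) p.
  by rewrite -D_opp; apply: (D_eq_on V) => // z /CR [].
have -> : D (a, false) (D (a, false) G) p = - D (a, false) (D (a, true) F) p.
  by rewrite -D_opp; apply: (D_eq_on V) => // z /CR [_ E]; rewrite /Dx /Dy in E; rewrite E; ring.
have -> : D (a, true) (D (a, true) G) p = D (a, true) (D (a, false) F) p.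
  by apply: (D_eq_on V) => // z /CR [E _]; symmetry.
by rewrite (D_comm V G p (a, false) (a, true)) // (D_comm V F p (a, false) (a, true)) //;
  split; ring.
Qed.

Lemma norm_dphi2_gP_inv K phi z : K <> 0 ->
  norm_dphi2 K phi z
  = \big[Rplus/0]_(b < n) ((Dx b phi z ^ 2 + Dy b phi z ^ 2) / 4 * gP_inv K (z b)).
Proof.
move=> K0; apply: eq_bigr => b _.
by rewrite Rdiv_gP // Cmod2_alt /dz /Re /Im /=; field.
Qed.

Lemma is_derive2_gP_inv_shift K p a im :
  exists w1 w2, is_derive2 (fun t => gP_inv K (shift p (a, im) t a)) 0 w1 w2.
Proof.
pose x := fst (p a); pose y := snd (p a).
pose e1 := if im then 0 else 1; pose e2 := if im then 1 else 0.
pose q t := (x + t * e1) ^ 2 + (y + t * e2) ^ 2.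
pose q' t := 2 * e1 * (x + t * e1) + 2 * e2 * (y + t * e2).
have -> : (fun t => gP_inv K (shift p (a, im) t a)) = (fun t => K * (1 - q t) ^ 2 / 2).
  apply: functional_extensionality => t.
  rewrite /gP_inv /shift /upd eqxx Cmod2_alt /q /x /y /e1 /e2; clear q' q e1 e2 x y.
  by case: im; rewrite /Re /Im /=; do 3 f_equal; ring.
eexists _, _; exists (fun t => - K * (1 - q t) * q' t); split; [|split]; try done.
- by apply: filter_forall => t; rewrite /q /q'; auto_derive => //; field.
- by rewrite /q /q'; auto_derive => //.
Qed.

Lemma is_derive2_shift V F p d : smooth_on V F -> open_Cn V -> V p ->
  is_derive2 (fun t => F (shift p d t)) 0 (D d F p) (D d (D d F) p).
Proof.
move=> HF HV Hp; exists (fun t => D d F (shift p d t)); rewrite shift0; split; [|split] => //.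
- by apply: filter_imp (open_near_shift V p d HV Hp) => t; apply: (is_derive_shift V).
- rewrite -{2}(shift0 p d); apply: (is_derive_shift V) (smooth_on_D _ _ _ HF) _.
  by rewrite shift0.
Qed.

Definition d2_norm_dphi2 K phi p d : R :=
  \big[Rplus/0]_(b < n)
    (((D d (Dx b phi) p) ^ 2 + Dx b phi p * D d (D d (Dx b phi)) p
      + (D d (Dy b phi) p) ^ 2 + Dy b phi p * D d (D d (Dy b phi)) p) / 2 * gP_inv K (p b)).

Lemma is_derive2_norm_dphi2_shift V K phi p a im :
  K <> 0 -> smooth_on V phi -> open_Cn V -> V p -> Dx a phi p = 0 -> Dy a phi p = 0 ->
  exists f1, is_derive2 (fun t => norm_dphi2 K phi (shift p (a, im) t)) 0 f1
                        (d2_norm_dphi2 K phi p (a, im)).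
Proof.
move=> K0 Hphi HV Hp Px0 Py0; have [w1 [w2 Hwa]] := is_derive2_gP_inv_shift K p a im.
have Hw b : is_derive2 (fun t => gP_inv K (shift p (a, im) t b)) 0
              (if b == a then w1 else 0) (if b == a then w2 else 0).
  case: eqP => [-> //|ba].
  by apply: is_derive2_ext (is_derive2_const (gP_inv K (p b)) 0) => // t; rewrite shift_other.
have -> : (fun t => norm_dphi2 K phi (shift p (a, im) t)) = fun t =>
    \big[Rplus/0]_(b < n) ((Dx b phi (shift p (a, im) t) ^ 2 + Dy b phi (shift p (a, im) t) ^ 2)
                           / 4 * gP_inv K (shift p (a, im) t b)).
  by apply: functional_extensionality => t; rewrite norm_dphi2_gP_inv.
eexists; rewrite /d2_norm_dphi2; apply: is_derive2_sum => b.
apply: is_derive2_ext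
  (is_derive2_weighted_sq _ _ _ _ _ _ _ _ _ _
     (is_derive2_shift V _ p (a, im) (smooth_on_D _ _ (b, false) Hphi) HV Hp)
     (is_derive2_shift V _ p (a, im) (smooth_on_D _ _ (b, true) Hphi) HV Hp) (Hw b) _)
  => [t|||]; rewrite ?shift0; try reflexivity.
by case: (eqVneq b a) => [->|_]; [right | left].
Qed.

Lemma ddbar_eq0_cauchy_riemann a b phi z : ddbar a b phi z = (0, 0) ->
  Dx a (Dy b phi) z = Dy a (Dx b phi) z /\ Dy a (Dy b phi) z = - Dx a (Dx b phi) z.
Proof. by rewrite /ddbar => [[E1 E2]]; split; lra. Qed.

Lemma ddbar_diag_laplacian a phi z g : ddbar a a phi z = (g, 0) ->
  Dx a (Dx a phi) z + Dy a (Dy a phi) z = 4 * g.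
Proof. by rewrite /ddbar => [[E1 _]]; lra. Qed.

Lemma d2_norm_dphi2_pos V K phi p a :
  K > 0 -> is_potential K V phi -> open_Cn V -> V p -> in_polydisc p ->
  Dx a phi p = 0 -> Dy a phi p = 0 ->
  0 < d2_norm_dphi2 K phi p (a, false) + d2_norm_dphi2 K phi p (a, true).
Proof.
move=> K0 [Hphi Hdd] HV Hp Hpd Px0 Py0.
rewrite /d2_norm_dphi2 -big_split (bigD1 a) //=.
apply: Rplus_lt_le_0_compat.
- have := Hdd p Hp a a; rewrite eqxx => /ddbar_diag_laplacian.
  have := gP_gt0 K (p a) K0 (Hpd a); have := gP_inv_gt0 K (p a) K0 (Hpd a).
  rewrite Px0 Py0 /Dx /Dy; set w := gP_inv K (p a).
  set Pxx := D _ (D (a, false) phi) p; set Qyy := D _ (D (a, true) phi) p.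
  set Pxy := D _ (D (a, false) phi) p; set Qyx := D _ (D (a, true) phi) p.
  move=> w0 g0 Hlap.
  have lap_pos : 0 < Pxx + Qyy by lra.
  have : 0 < (Pxx ^ 2 + Qyy ^ 2) * w.
    by apply: Rmult_lt_0_compat => //; have := pow2_ge_0 (Pxx - Qyy); nra.
  have : 0 <= Pxy ^ 2 * w by apply: Rmult_le_pos => //; nra.
  have : 0 <= Qyx ^ 2 * w by apply: Rmult_le_pos => //; nra.
  nra.
- apply: big_ind => [|x y|b ba]; [lra|lra|].
  have Hdd0 z : V z -> ddbar a b phi z = (0, 0).
    by move=> Hz; rewrite (Hdd z Hz a b) eq_sym (negbTE ba).
  have [lapQ lapP] := cauchy_riemann_laplacian V (Dy b phi) (Dx b phi) p a
    (smooth_on_D _ _ _ Hphi) (smooth_on_D _ _ _ Hphi) HV Hp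
    (fun z Hz => ddbar_eq0_cauchy_riemann a b phi z (Hdd0 z Hz)).
  have := Rlt_le _ _ (gP_inv_gt0 K (p b) K0 (Hpd b)).
  move: lapQ lapP; rewrite /Dx /Dy /=; nra.
Qed.

End Polydisc.

Lemma C_derive_const_on_disc (f : C -> C) c z0 :
  in_disc z0 -> (forall z, in_disc z -> f z = c) -> C_derive f z0 = 0.
Proof.
move=> Hz0 Hc; apply: is_C_derive_unique.
apply: (is_derive_ext_loc (fun _ => c)); last exact: is_derive_const.
have r0 : 0 < (1 - Cmod z0) / 2 by rewrite /in_disc in Hz0; lra.
exists (mkposreal _ r0) => z Hz; symmetry; apply: Hc.
have -> : z = Cplus z0 (Cminus z z0).
  by rewrite /Cminus /Cplus /=; apply: injective_projections => /=; ring.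
apply: Rle_lt_trans (Cmod_triangle _ _) _.
have : Cmod (Cminus z z0) < (1 - Cmod z0) / 2 := Hz.
by rewrite /in_disc in Hz0; lra.
Qed.

Lemma grad_eq0 n K phi (z : Cn n) a : 0 < gP K (z a) -> grad K phi z a = 0 ->
  Dx a phi z = 0 /\ Dy a phi z = 0.
Proof.
move=> /Rinv_0_lt_compat g0 E; have := f_equal fst E; have := f_equal snd E.
by rewrite /grad /dz /Cmult /Cconj /=; split; nra.
Qed.

Theorem lemma3p3 (n : nat) (K K' Cst : R) (u : 'I_n -> C -> C)
  (V : Cn n -> Prop) (phi : Cn n -> R) :
  K > 0 -> K' > 0 -> Cst > 0 ->
  tot_geod_isom_embedding K K' u ->
  open_Cn V -> (forall z, V z -> in_polydisc z) ->
  (exists zeta, in_disc zeta /\ V (fun a => u a zeta)) ->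
  is_potential K V phi ->
  (forall z, V z -> norm_dphi2 K phi z <= Cst) ->
  (forall zeta, in_disc zeta -> V (fun a => u a zeta) ->
     exists lam : C, forall a,
       grad K phi (fun b => u b zeta) a = Cmult lam (C_derive (u a) zeta)) ->
  (forall zeta, in_disc zeta -> V (fun a => u a zeta) ->
     norm_dphi2 K phi (fun b => u b zeta) = Cst) ->
  forall a : 'I_n, ~ (exists c : C, forall zeta, in_disc zeta -> u a zeta = c).
Proof.
move=> K0 _ _ _ HV Vdisc [z0 [Hz0 Hp]] Hpot Hle Htangent Hmax a [c Hc].
set p : Cn n := fun b => u b z0.
have [Px0 Py0] : Dx a phi p = 0 /\ Dy a phi p = 0.
  have [lam /(_ a)] := Htangent z0 Hz0 Hp.
  rewrite (C_derive_const_on_disc _ c z0 Hz0 Hc) Cmult_0_r.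
  by apply: grad_eq0; apply: gP_gt0 K0 (Vdisc p Hp a).
have d2_nonpos im : d2_norm_dphi2 n K phi p (a, im) <= 0.
  have [f1 Hd2] := is_derive2_norm_dphi2_shift n V K phi p a im
    (Rgt_not_eq _ _ K0) (proj1 Hpot) HV Hp Px0 Py0.
  apply: is_derive2_local_max Hd2 _; rewrite (shift0 n p (a, im)) (Hmax z0 Hz0 Hp).
  by apply: filter_imp (open_near_shift n V p (a, im) HV Hp) => t; apply: Hle.
have := d2_norm_dphi2_pos n V K phi p a K0 Hpot HV Hp (Vdisc p Hp) Px0 Py0.
by have := d2_nonpos false; have := d2_nonpos true; lra.
Qed.
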